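(* Proportional approval voting (PAV) is the only Thiele rule (for the fixed $m$ and $k$) that satisfies party-proportionality.
   Context: Let $\mathcal C=\{c_1,\dots,c_m\}$ ($m\ge2$) be the candidates, $\mathcal A$ the set of non-empty subsets of $\mathcal C$ (ballots), and a profile a map $A:N_A\to\mathcal A$ from a non-empty finite set of voters $N_A\subseteq\mathbb N$. Fix $k\in\{1,\dots,m-1\}$, and let $\mathcal W_k$ be the set of $k$-element subsets of $\mathcal C$ (committees). An ABC voting rule maps each profile to a non-empty subset of $\mathcal W_k$. A Thiele rule is an ABC voting rule for which there is a non-decreasing $s:\{0,\dots,k\}\to\mathbb R$ with $s(0)=0$ such that $f(A)$ is the set of committees $W$ maximizing $\sum_{i\in N_A}s(|A_i\cap W|)$. PAV is the Thiele rule with $s(x)=\sum_{z=1}^x\frac1z$. A profile $A$ is a party-list profile if there is a partition $\mathcal P_A=\{P_1,\dots,P_\ell\}$ of $\mathcal C$ such that every voter's ballot equals some $P_j$; $n_j$ denotes the number of voters whose ballot is $P_j$. An ABC voting rule $f$ is party-proportional if for all party-list profiles $A$, all $W\in f(A)$, and all parties $P_i,P_j\in\mathcal P_A$ with $n_i/|P_i|<n_j/|P_j|$, $P_i\subseteq W$ implies $P_j\subseteq W$. *)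

From HB Require Import structures.
From mathcomp Require Import all_boot all_order all_algebra.
From mathcomp Require Import finmap.
From mathcomp Require Import reals.
Set Implicit Arguments. Unset Strict Implicit. Unset Printing Implicit Defensive.
Import Order.TTheory GRing.Theory Num.Theory.
Local Open Scope ring_scope.
Local Open Scope fset_scope.

(* Candidates are 'I_m; ballots are (non-empty) sets of candidates.
   A profile is a finite partial map from voter names (nat) to ballots;
   its domain is the set of voters N_A. *)
Definition profile (m : nat) := {fmap nat -> {set 'I_m}}.

Definition valid_profile (m : nat) (A : profile m) : Prop :=
  domf A != fset0 /\ forall i : domf A, A i != set0.

Definition abc_rule (m : nat) := profile m -> {set {set 'I_m}}.

Definition is_abc_rule (m k : nat) (f : abc_rule m) : Prop :=
  forall A : profile m, valid_profile A ->
    f A != set0 /\ forall W, W \in f A -> #|W| = k.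

Definition thiele_score (R : realType) (m : nat) (s : nat -> R)
    (A : profile m) (W : {set 'I_m}) : R :=
  \sum_(i : domf A) s #|A i :&: W|.

Definition thiele_rule (R : realType) (m k : nat) (s : nat -> R)
    (A : profile m) : {set {set 'I_m}} :=
  [set W : {set 'I_m} | (#|W| == k) &&
     [forall W' : {set 'I_m}, (#|W'| == k) ==>
        (thiele_score s A W' <= thiele_score s A W)]].

(* Admissible Thiele scoring function on {0,...,k}: s(0)=0, nondecreasing.
   (Values of s beyond k are never used since |A_i ∩ W| <= |W| = k.) *)
Definition thiele_score_fun (R : realType) (k : nat) (s : nat -> R) : Prop :=
  s 0%N = 0 /\ forall x y : nat, (x <= y)%N -> (y <= k)%N -> s x <= s y.

Definition is_thiele_rule (R : realType) (m k : nat) (f : abc_rule m) : Prop :=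
  exists s : nat -> R, thiele_score_fun k s /\
    forall A : profile m, valid_profile A -> f A = thiele_rule k s A.

Definition pav_score (R : realType) (x : nat) : R :=
  \sum_(1 <= z < x.+1) (z%:R)^-1.

Definition PAV (R : realType) (m k : nat) : abc_rule m :=
  thiele_rule k (@pav_score R).

Definition party_list_for (m : nat) (A : profile m) (P : {set {set 'I_m}}) : Prop :=
  partition P [set: 'I_m] /\ forall i : domf A, A i \in P.

Definition party_support (m : nat) (A : profile m) (Q : {set 'I_m}) : nat :=
  #|[set i : domf A | A i == Q]|.

Definition party_proportional (R : realType) (m : nat) (f : abc_rule m) : Prop :=
  forall (A : profile m) (P : {set {set 'I_m}}),
    valid_profile A -> party_list_for A P ->
    forall W, W \in f A ->
    forall Pi Pj, Pi \in P -> Pj \in P ->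
      ((party_support A Pi)%:R / (#|Pi|)%:R : R)
        < (party_support A Pj)%:R / (#|Pj|)%:R ->
      Pi \subset W -> Pj \subset W.

Arguments valid_profile m A : clear implicits.
Arguments is_abc_rule m k f : clear implicits.
Arguments thiele_score R m s A W : clear implicits.
Arguments thiele_rule R m k s A : clear implicits.
Arguments thiele_score_fun R k s : clear implicits.
Arguments is_thiele_rule R m k f : clear implicits.
Arguments pav_score R x : clear implicits.
Arguments PAV R m k A : clear implicits.
Arguments party_proportional R m f : clear implicits.

From HB Require Import structures.
From mathcomp Require Import all_boot all_order all_algebra.
From mathcomp Require Import finmap.
From mathcomp Require Import reals.
From mathcomp Require Import lra ring zify.
Set Implicit Arguments. Unset Strict Implicit. Unset Printing Implicit Defensive.
Import Order.TTheory GRing.Theory Num.Theory.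
Local Open Scope ring_scope.

(* PAV is party-proportional by an exchange argument: if a PAV committee W
   contains a party P_i but misses a candidate d of a party P_j with more
   voters per candidate, replacing some c in P_i by d costs each P_i voter
   exactly 1/|P_i| and gains each P_j voter at least 1/|P_j|, a strict
   improvement.
   Conversely, let s be the scores of a party-proportional Thiele rule, and
   0 < x <= k.  In the profile where the party {0, ..., x-1} has q1 voters per
   candidate and each singleton {x}, ..., {k} has q2 voters, one of the
   committees {0, ..., k-1} and {1, ..., k} wins, according to the sign of
   x q1 (s x - s (x-1)) - q2 s 1.  Party-proportionality forbids the first
   when q1 < q2 and the second when q2 < q1; letting q1/q2 tend to 1 from both
   sides gives x (s x - s (x-1)) = s 1, i.e. s = s 1 * pav_score, and s 1 > 0
   makes the two rules coincide. *)

Definition ord_range (m lo hi : nat) : {set 'I_m} :=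
  [set c : 'I_m | (lo <= c < hi)%N].

Lemma card_ord_range m lo hi :
  (lo <= hi <= m)%N -> #|ord_range m lo hi| = (hi - lo)%N.
Proof.
case/andP=> lo_hi hi_m; rewrite cardsE cardE /enum_mem size_filter -enumT.
have -> : count (mem [pred c : 'I_m | lo <= c < hi]%N) (enum 'I_m)
        = count (fun i => lo <= i < hi)%N (map val (enum 'I_m)) by rewrite count_map.
rewrite val_enum_ord -(subnKC (leq_trans lo_hi hi_m)) iotaD count_cat add0n.
rewrite (@eq_in_count _ _ pred0) ?count_pred0; last first.
  by move=> i; rewrite mem_iota add0n /= => i_lt_lo; rewrite leqNgt i_lt_lo.
rewrite -size_filter (@eq_in_filter _ _ (fun i => i < lo + (hi - lo))%N); last first.
  by move=> i; rewrite mem_iota => /andP[-> _]; rewrite subnKC.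
by rewrite filter_iota_ltn ?size_iota // leq_sub2r.
Qed.

Lemma ord_rangeI m lo1 hi1 lo2 hi2 :
  ord_range m lo1 hi1 :&: ord_range m lo2 hi2 = ord_range m (maxn lo1 lo2) (minn hi1 hi2).
Proof. by apply/setP => c; rewrite !inE geq_max leq_min andbACA. Qed.

Definition profile_of_ballots (m : nat) (bs : seq {set 'I_m}) : profile m :=
  [fmap i : seq_fset tt (iota 0 (size bs)) => nth set0 bs (val i)].

Section ProfileOfBallots.
Variables (m : nat) (bs : seq {set 'I_m}).
Local Notation A := (profile_of_ballots bs).

Lemma big_profile_of_ballots (V : nmodType) (g : {set 'I_m} -> V) :
  \sum_(i : domf A) g (A i) = \sum_(b <- bs) g b.
Proof.
under eq_bigr => i _ do rewrite ffunE.
rewrite -(big_seq_fsetE _ _ predT (fun i => g (nth set0 bs i))).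
rewrite (perm_big _ (seq_fset_perm _ _)) undup_id ?iota_uniq //.
by rewrite (big_nth set0) /index_iota subn0.
Qed.

Lemma profile_of_ballots_mem (i : domf A) : A i \in bs.
Proof.
have := valP i; rewrite seq_fsetE mem_iota add0n => ilt.
by rewrite ffunE mem_nth.
Qed.

Lemma domf_profile_of_ballots : bs != [::] -> domf A != fset0.
Proof.
move=> bs_nnil; apply/fset0Pn; exists 0%N.
by rewrite seq_fsetE mem_iota lt0n size_eq0.
Qed.

Lemma party_support_profile_of_ballots Q : party_support A Q = count_mem Q bs.
Proof.
rewrite /party_support cardsE -sum1_card -sum1_count big_mkcond [RHS]big_mkcond /=.
exact: (big_profile_of_ballots (fun b => if b == Q then 1%N else 0%N)).
Qed.

End ProfileOfBallots.

Lemma mem_thiele_rule (R : realType) m k (s : nat -> R) (A : profile m)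
    (W : {set 'I_m}) :
  #|W| = k ->
  (forall W' : {set 'I_m}, #|W'| = k ->
     thiele_score R m s A W' <= thiele_score R m s A W) ->
  W \in thiele_rule R m k s A.
Proof.
move=> W_k W_max; rewrite inE W_k eqxx /=.
by apply/forallP => W'; apply/implyP => /eqP /W_max.
Qed.

Lemma thiele_rule_scale (R : realType) m k (s t : nat -> R) (a : R) (A : profile m) :
  0 < a -> (forall j, (j <= k)%N -> s j = a * t j) ->
  thiele_rule R m k s A = thiele_rule R m k t A.
Proof.
move=> a_gt0 s_t.
have score_scale (W : {set 'I_m}) : #|W| = k ->
    thiele_score R m s A W = a * thiele_score R m t A W.
  move=> W_k; rewrite /thiele_score mulr_sumr; apply: eq_bigr => i _; apply: s_t.
  by rewrite -W_k subset_leq_card // subsetIr.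
apply/setP => W; rewrite !inE; have [/eqP W_k | //] := boolP (#|W| == k).
apply: eq_forallb => W'; have [/eqP W'_k | //] := boolP (#|W'| == k).
by rewrite !score_scale // ler_pM2l.
Qed.

Lemma party_proportional_ratio_le (R : realType) m (f : abc_rule m) A P
    (W Pi Pj : {set 'I_m}) :
  party_proportional R m f -> valid_profile m A -> party_list_for A P ->
  W \in f A -> Pi \in P -> Pj \in P -> Pi \subset W -> ~~ (Pj \subset W) ->
  ((party_support A Pj)%:R / #|Pj|%:R : R) <= (party_support A Pi)%:R / #|Pi|%:R.
Proof.
move=> f_pp A_valid A_P W_f Pi_P Pj_P Pi_W; apply: contraR; rewrite -ltNge.
by move=> lt_ratio; rewrite (f_pp _ _ A_valid A_P _ W_f _ _ Pi_P Pj_P).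
Qed.

Lemma natr_party_support (R : nzSemiRingType) m (A : profile m) Q :
  (party_support A Q)%:R = \sum_(i : domf A) (A i == Q)%:R :> R.
Proof.
rewrite /party_support -sum1_card natr_sum big_mkcond.
by apply: eq_bigr => i _; rewrite inE; case: (_ == _).
Qed.

Lemma pav_score0 (R : realType) : pav_score R 0 = 0.
Proof. by rewrite /pav_score big_geq. Qed.

Lemma pav_scoreS (R : realType) n : pav_score R n.+1 = pav_score R n + n.+1%:R^-1.
Proof. by rewrite /pav_score big_nat_recr. Qed.

Lemma pav_score_nondecreasing (R : realType) :
  {homo pav_score R : i j / (i <= j)%N >-> i <= j}.
Proof.
apply: homo_leq => [x | j i l | n]; [exact: lexx | exact: le_trans |].
by rewrite pav_scoreS lerDl invr_ge0.
Qed.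

Lemma card_setI_swap (T : finType) (B W : {set T}) c d : c \in W -> d \notin W ->
  (#|B :&: (d |: (W :\ c))| + (c \in B) = #|B :&: W| + (d \in B))%N.
Proof.
move=> cW dNW.
have dNBWc : d \notin (B :&: W) :\ c by rewrite !inE (negbTE dNW) !andbF.
rewrite [in RHS](cardsD1 c (B :&: W)) inE cW andbT.
have [dB | dNB] := boolP (d \in B).
  have -> : B :&: (d |: (W :\ c)) = d |: ((B :&: W) :\ c).
    by apply/setP => y; rewrite !inE; case: eqP => [->|_] /=; rewrite ?andbT // andbCA.
  by rewrite cardsU1 dNBWc; lia.
have -> : B :&: (d |: (W :\ c)) = (B :&: W) :\ c.
  apply/setP => y; rewrite !inE; case: eqP => [->|_] /=; last by rewrite andbCA.
  by rewrite (negbTE dNB) (negbTE dNW) !andbF.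
by rewrite addnC addn0.
Qed.

Lemma pav_swap_gain (R : realType) m (P : {set {set 'I_m}}) (Pi Pj W B : {set 'I_m})
    c d :
  trivIset P -> B \in P -> Pi \in P -> Pj \in P -> Pi != Pj ->
  c \in Pi -> Pi \subset W -> d \in Pj -> d \notin W ->
  (B == Pj)%:R / #|Pj|%:R - (B == Pi)%:R / #|Pi|%:R
    <= pav_score R #|B :&: (d |: (W :\ c))| - pav_score R #|B :&: W|.
Proof.
move=> P_triv B_P Pi_P Pj_P Pi_Pj c_Pi Pi_W d_Pj dNW.
have swap := card_setI_swap B (subsetP Pi_W c c_Pi) dNW.
have disj X Y : X \in P -> Y \in P -> X != Y -> [disjoint X & Y].
  by move=> X_P Y_P; apply: (trivIsetP P_triv).
have [B_Pi | B_Pi] := eqVneq B Pi.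
  subst B; rewrite (setIidPl Pi_W) c_Pi in swap.
  rewrite (disjointFl (disj _ _ Pi_P Pj_P Pi_Pj) d_Pj) in swap.
  rewrite (negbTE Pi_Pj) (setIidPl Pi_W) -[#|Pi|]addn0 -swap addn1 pav_scoreS.
  by rewrite mul0r mul1r add0r opprD addNKr.
have [B_Pj | B_Pj] := eqVneq B Pj.
  subst B; have Pj_Pi : Pj != Pi by rewrite eq_sym.
  rewrite (disjointFl (disj _ _ Pj_P Pi_P Pj_Pi) c_Pi) d_Pj addn0 addn1 in swap.
  rewrite mul1r mul0r subr0 swap pav_scoreS addrC addKr.
  rewrite lef_pV2 ?posrE ?ltr0n ?card_gt0 // ?ler_nat; last by apply/set0Pn; exists d.
  by rewrite -swap; apply/subset_leq_card/subsetIl.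
rewrite (disjointFl (disj _ _ B_P Pi_P B_Pi) c_Pi) in swap.
rewrite (disjointFl (disj _ _ B_P Pj_P B_Pj) d_Pj) !addn0 in swap.
by rewrite swap subrr !mul0r subrr.
Qed.

Lemma pav_party_proportional (R : realType) m k : party_proportional R m (PAV R m k).
Proof.
move=> A P _ [/and3P[_ P_triv P_nz] A_P] W W_pav Pi Pj Pi_P Pj_P ratio_lt Pi_W.
apply/subsetP => d d_Pj; apply/negPn/negP => dNW.
move: W_pav; rewrite inE => /andP[/eqP W_k /forallP W_max].
have [c c_Pi] : exists c, c \in Pi by apply/set0Pn; apply: contraNneq P_nz => <-.
have Pi_Pj : Pi != Pj by apply: contraTneq ratio_lt => ->; rewrite ltxx.
have W'_k : #|d |: (W :\ c)| == k.
  by rewrite cardsU1 !inE (negbTE dNW) andbF -W_k (cardsD1 c W) (subsetP Pi_W).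
have := implyP (W_max _) W'_k; apply/negP.
rewrite -ltNge -subr_gt0 /thiele_score -sumrB.
apply: (@lt_le_trans _ _
  (\sum_(i : domf A) ((A i == Pj)%:R / #|Pj|%:R - (A i == Pi)%:R / #|Pi|%:R))).
  by rewrite sumrB -!mulr_suml -!natr_party_support subr_gt0.
apply: ler_sum => i _.
exact: pav_swap_gain (A_P i) Pi_P Pj_P Pi_Pj c_Pi Pi_W d_Pj dNW.
Qed.

Lemma score_le_corners (R : realFieldType) (s : nat -> R) (N Q : R) x k a b :
  (forall i j, (i <= j)%N -> (j <= k)%N -> s i <= s j) -> 0 <= N -> 0 <= Q ->
  (0 < x <= k)%N -> (a <= x)%N -> (b <= k.+1 - x)%N -> (a + b <= k)%N ->
  N * s a + Q * b%:R <= N * s x + Q * (k - x)%:R \/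
  N * s a + Q * b%:R <= N * s x.-1 + Q * (k.+1 - x)%:R.
Proof.
move=> s_mono N_ge0 Q_ge0 /andP[x_gt0 x_le_k] a_le_x b_le ab_le.
have [a_lt_x | x_le_a] := ltnP a x.
  right; apply: lerD; apply: ler_wpM2l => //; last by rewrite ler_nat.
  by apply: s_mono; [rewrite -ltnS prednK | exact: leq_trans (leq_pred x) _].
have a_x : a = x by apply/eqP; rewrite eqn_leq a_le_x.
left; rewrite a_x lerD2l; apply: ler_wpM2l => //.
by rewrite ler_nat leq_subRL // -a_x.
Qed.

Definition test_ballots (m x k q1 q2 : nat) : seq {set 'I_m} :=
  nseq (x * q1) (ord_range m 0 x) ++
  flatten [seq nseq q2 [set c] | c <- enum (ord_range m x k.+1)].

Definition test_profile (m x k q1 q2 : nat) : profile m :=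
  profile_of_ballots (test_ballots m x k q1 q2).

Definition test_party_key (m x : nat) (c : 'I_m) : option 'I_m :=
  if (c < x)%N then None else Some c.

Definition test_parties (m x : nat) : {set {set 'I_m}} :=
  preim_partition (test_party_key x) [set: 'I_m].

Lemma big_party_in_test_parties m x :
  (0 < x <= m)%N -> ord_range m 0 x \in test_parties m x.
Proof.
case/andP=> x_gt0 x_le_m; apply/imsetP; exists (Ordinal (leq_trans x_gt0 x_le_m)) => //.
by apply/setP => d; rewrite !inE /test_party_key /= x_gt0; case: ifP.
Qed.

Lemma single_in_test_parties m x (c : 'I_m) :
  (x <= c)%N -> [set c] \in test_parties m x.
Proof.
move=> x_le_c; apply/imsetP; exists c => //; apply/setP => d.
rewrite !inE /test_party_key ltnNge x_le_c /=; case: ifP => [d_lt_x|_].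
  by apply/negbTE; apply: contraTneq d_lt_x => ->; rewrite -leqNgt.
by apply/eqP/eqP => [->|[]].
Qed.

Section TestProfile.
Variables (m x k q1 q2 : nat).
Hypotheses (x_gt0 : (0 < x)%N) (x_le_k : (x <= k)%N) (k_lt_m : (k < m)%N).

Local Notation big_party := (ord_range m 0 x).
Local Notation singles := (ord_range m x k.+1).
Local Notation A := (test_profile m x k q1 q2).

Let x_le_m : (x <= m)%N. Proof. exact: leq_trans x_le_k (ltnW k_lt_m). Qed.

Lemma big_test_ballots (V : nmodType) (g : {set 'I_m} -> V) :
  \sum_(b <- test_ballots m x k q1 q2) g b
    = g big_party *+ (x * q1) + \sum_(c in singles) g [set c] *+ q2.
Proof.
rewrite big_cat big_nseq iter_addr_0 big_flatten big_map big_enum /=.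
by under eq_bigr do rewrite big_nseq iter_addr_0.
Qed.

Lemma single_neq_big_party c : c \in singles -> [set c] != big_party.
Proof.
rewrite inE => /andP[x_le_c _]; apply/eqP => /setP /(_ c).
by rewrite !inE eqxx ltnNge x_le_c.
Qed.

Lemma test_ballotsP b : b \in test_ballots m x k q1 q2 ->
  b = big_party \/ exists2 c, c \in singles & b = [set c].
Proof.
rewrite mem_cat => /orP[/nseqP[-> _]|]; first by left.
case/flattenP=> bs /mapP[c]; rewrite mem_enum => c_s -> /nseqP[b_c _].
by right; exists c.
Qed.

Lemma test_party_list : party_list_for A (test_parties m x).
Proof.
split; first exact: preim_partitionP.
move=> i; have /test_ballotsP[->|[c]] := profile_of_ballots_mem i.
  by apply: big_party_in_test_parties; rewrite x_gt0 x_le_m.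
by rewrite inE => /andP[x_le_c _] ->; apply: single_in_test_parties.
Qed.

Lemma test_profile_valid : (0 < q1)%N -> valid_profile m A.
Proof.
move=> q1_gt0; split.
  apply: domf_profile_of_ballots; rewrite /test_ballots -size_eq0 size_cat size_nseq.
  by rewrite -lt0n ltn_addr // muln_gt0 x_gt0.
move=> i; have /test_ballotsP[->|[c _ ->]] := profile_of_ballots_mem i; apply/set0Pn.
  by exists (Ordinal (leq_trans x_gt0 x_le_m)); rewrite inE /= x_gt0.
by exists c; rewrite set11.
Qed.

Lemma test_support Q : party_support A Q
  = ((Q == big_party) * (x * q1) + \sum_(c in singles) ([set c] == Q) * q2)%N.
Proof.
rewrite party_support_profile_of_ballots -sum1_count big_mkcond big_test_ballots /=.
rewrite eq_sym.
have bool_muln (b : bool) n : (if b then 1%N else 0%N) *+ n = (b * n)%N.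
  by case: b; rewrite ?natn ?mul0rn ?mul1n.
by rewrite bool_muln; under eq_bigr do rewrite bool_muln.
Qed.

Lemma test_support_big_party : party_support A big_party = (x * q1)%N.
Proof.
rewrite test_support eqxx mul1n big1 ?addn0 // => c /single_neq_big_party.
by move/negbTE ->.
Qed.

Lemma test_support_single t : t \in singles -> party_support A [set t] = q2.
Proof.
move=> t_s; rewrite test_support (negbTE (single_neq_big_party t_s)) add0n.
rewrite (bigD1 t) //= eqxx mul1n big1 ?addn0 // => c /andP[_ c_t].
by rewrite (inj_eq set1_inj) (negbTE c_t).
Qed.

Lemma test_score (R : realType) (s : nat -> R) W : s 0%N = 0 ->
  thiele_score R m s A W
    = (x * q1)%:R * s #|big_party :&: W| + q2%:R * s 1%N * #|singles :&: W|%:R.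
Proof.
move=> s0; rewrite /thiele_score (big_profile_of_ballots _ (fun b => s #|b :&: W|)).
rewrite big_test_ballots mulr_natl.
congr (_ + _); rewrite (bigID (mem W)) /= [X in _ + X]big1 ?addr0; last first.
  by move=> c /andP[_ cNW]; rewrite (_ : _ :&: W = set0) ?cards0 ?s0 ?mul0rn //;
     apply/setP => d; rewrite !inE; case: eqP => // ->; rewrite (negbTE cNW).
rewrite (eq_bigl (fun c => c \in singles :&: W)) => [|c]; last by rewrite !inE.
rewrite (eq_bigr (fun=> s 1%N *+ q2)) => [|c]; last first.
  by move=> /setIP[_ cW]; rewrite (setIidPl _) ?cards1 // sub1set.
by rewrite sumr_const -mulrnA mulr_natr mulr_natl mulrnA.
Qed.

Section Committees.
Variables (R : realType) (s : nat -> R).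
Hypothesis s_score : thiele_score_fun R k s.

Local Notation score := (thiele_score R m s A).
Local Notation W0 := (ord_range m 0 k).
Local Notation W1 := (ord_range m 1 k.+1).

Let k_le_m : (k <= m)%N. Proof. exact: ltnW. Qed.

Lemma test_score_corner0 :
  score W0 = (x * q1)%:R * s x + q2%:R * s 1%N * (k - x)%:R.
Proof.
rewrite test_score; last by case: s_score.
rewrite !ord_rangeI max0n maxn0 (minn_idPl x_le_k) (minn_idPr (leqnSn k)).
by rewrite !card_ord_range ?x_le_m ?x_le_k ?k_le_m ?subn0.
Qed.

Lemma test_score_corner1 :
  score W1 = (x * q1)%:R * s x.-1 + q2%:R * s 1%N * (k.+1 - x)%:R.
Proof.
rewrite test_score; last by case: s_score.
rewrite !ord_rangeI max0n (maxn_idPl x_gt0) (minn_idPl (leqW x_le_k)) minnn.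
by rewrite !card_ord_range ?subn1 ?x_gt0 ?x_le_m ?leqW.
Qed.

Lemma test_score_le_corners (W : {set 'I_m}) :
  #|W| = k -> score W <= score W0 \/ score W <= score W1.
Proof.
have [s0 s_mono] := s_score; move=> W_k.
rewrite test_score_corner0 test_score_corner1 test_score //.
apply: score_le_corners => //; rewrite ?x_gt0 ?x_le_k //.
- by rewrite mulr_ge0 // -s0 s_mono // (leq_trans x_gt0).
- rewrite -[x in (_ <= x)%N]subn0 -(@card_ord_range m) ?x_le_m //.
  exact: subset_leq_card (subsetIl _ _).
- rewrite -(@card_ord_range m x k.+1) ?(leqW x_le_k) //.
  exact: subset_leq_card (subsetIl _ _).
have disj : big_party :&: singles = set0.
  by apply/setP => c; rewrite !inE /=; case: ltnP.
rewrite -cardsUI setIACA disj set0I cards0 addn0 -setIUl -W_k.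
exact: subset_leq_card (subsetIr _ _).
Qed.

Lemma test_score_corners_sub :
  score W0 - score W1 = (x * q1)%:R * (s x - s x.-1) - q2%:R * s 1%N.
Proof.
rewrite test_score_corner0 test_score_corner1 subSn // mulrS; ring.
Qed.

End Committees.

Lemma test_ratio_big_party (R : realType) :
  (party_support A big_party)%:R / #|big_party|%:R = q1%:R :> R.
Proof.
rewrite test_support_big_party card_ord_range ?x_le_m // subn0 natrM mulrC mulKf //.
by rewrite pnatr_eq0 -lt0n.
Qed.

Lemma test_ratio_single (R : realType) t : t \in singles ->
  (party_support A [set t])%:R / #|[set t]|%:R = q2%:R :> R.
Proof. by move=> t_s; rewrite test_support_single // cards1 divr1. Qed.

End TestProfile.

Lemma natmul_bounded_le0 (R : archiRealFieldType) (a e : R) :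
  (forall n, n.+1%:R * e <= a) -> e <= 0.
Proof.
move=> bounded; rewrite leNgt; apply/negP => e_gt0.
set n := Num.bound (`|a| / e).
have a_lt : `|a| < n%:R * e.
  by rewrite -ltr_pdivrMr // archi_boundP // divr_ge0 // ltW.
have : n%:R * e <= a.
  by apply: le_trans (bounded n); rewrite ler_pM2r // ler_nat.
by apply/negP; rewrite -ltNge (le_lt_trans (ler_norm a)).
Qed.

Section PartyProportionalThiele.
Variables (R : realType) (m k : nat) (s : nat -> R) (f : abc_rule m).
Hypotheses (s_score : thiele_score_fun R k s)
  (f_thiele : forall A, valid_profile m A -> f A = thiele_rule R m k s A)
  (f_pp : party_proportional R m f) (k_lt_m : (k < m)%N).

Lemma pp_thiele_marginal_bounds x q1 q2 : (0 < x <= k)%N -> (0 < q1)%N ->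
  (q2%:R * s 1%N <= (x * q1)%:R * (s x - s x.-1) -> (q2 <= q1)%N) /\
  ((x * q1)%:R * (s x - s x.-1) <= q2%:R * s 1%N -> (q1 <= q2)%N).
Proof.
case/andP=> x_gt0 x_le_k q1_gt0; set A := test_profile m x k q1 q2.
have A_valid := test_profile_valid q2 x_gt0 x_le_k k_lt_m q1_gt0.
have A_P := test_party_list q1 q2 x_gt0 x_le_k k_lt_m.
have score_le := test_score_le_corners q1 q2 x_gt0 x_le_k k_lt_m s_score.
have score_sub := test_score_corners_sub q1 q2 x_gt0 x_le_k k_lt_m s_score.
pose c0 : 'I_m := Ordinal (leq_ltn_trans (leq0n k) k_lt_m).
pose ck : 'I_m := Ordinal k_lt_m.
have ck_single : ck \in ord_range m x k.+1 by rewrite inE /= x_le_k ltnS leqnn.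
have W0_k : #|ord_range m 0 k| = k by rewrite card_ord_range ?subn0 // (ltnW k_lt_m).
have W1_k : #|ord_range m 1 k.+1| = k.
  by rewrite card_ord_range ?subn1 // k_lt_m andbT (leq_trans x_gt0).
split=> le_gain.
- have W0_f : ord_range m 0 k \in f A.
    rewrite f_thiele // mem_thiele_rule // => W /score_le[] // /le_trans; apply.
    by rewrite -subr_ge0 score_sub subr_ge0.
  rewrite -(@ler_nat R) -(test_ratio_single q1 q2 R ck_single).
  rewrite -(test_ratio_big_party q1 q2 x_gt0 x_le_k k_lt_m R).
  apply: (party_proportional_ratio_le f_pp A_valid A_P W0_f).
  + by apply: big_party_in_test_parties; rewrite x_gt0 (leq_trans x_le_k (ltnW k_lt_m)).
  + by apply: single_in_test_parties.
  + by apply/subsetP => c; rewrite !inE => /andP[_ c_lt_x]; exact: leq_trans x_le_k.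
  + by rewrite sub1set inE /= ltnn.
- have W1_f : ord_range m 1 k.+1 \in f A.
    rewrite f_thiele // mem_thiele_rule // => W /score_le[] // /le_trans; apply.
    by rewrite -subr_ge0 -opprB score_sub oppr_ge0 subr_le0.
  rewrite -(@ler_nat R) -(test_ratio_single q1 q2 R ck_single).
  rewrite -(test_ratio_big_party q1 q2 x_gt0 x_le_k k_lt_m R).
  apply: (party_proportional_ratio_le f_pp A_valid A_P W1_f).
  + by apply: single_in_test_parties.
  + by apply: big_party_in_test_parties; rewrite x_gt0 (leq_trans x_le_k (ltnW k_lt_m)).
  + by rewrite sub1set inE /= ltnS leqnn (leq_trans x_gt0).
  + by apply/subsetP => /(_ c0); rewrite !inE /= x_gt0 => /(_ isT).
Qed.

Lemma pp_thiele_score1_gt0 : (0 < k)%N -> 0 < s 1%N.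
Proof.
have [s0 s_mono] := s_score; move=> k_gt0; rewrite ltNge; apply/negP => s1_le0.
have s1_0 : s 1%N = 0 by apply/le_anti; rewrite s1_le0 -s0 s_mono.
have [two_le_one _] := @pp_thiele_marginal_bounds 1 1 2 k_gt0 isT.
by move: two_le_one; rewrite s1_0 s0 subrr !mulr0 lexx => /(_ isT).
Qed.

Lemma pp_thiele_marginal x : (0 < x <= k)%N -> x%:R * (s x - s x.-1) = s 1%N.
Proof.
move=> x_range; set D := x%:R * _.
have marginalE q1 : (x * q1)%:R * (s x - s x.-1) = q1%:R * D.
  by rewrite natrM mulrAC mulrC.
(* Let q1/q2 tend to 1 from below, then from above. *)
apply/eqP; rewrite eq_le -subr_le0 -[s 1%N <= D]subr_le0; apply/andP; split.
- apply: (natmul_bounded_le0 (a := s 1%N)) => n.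
  have [+ _] := pp_thiele_marginal_bounds n.+2 x_range (ltn0Sn n).
  rewrite marginalE ltnn => not_le.
  have: ~~ (n.+2%:R * s 1%N <= n.+1%:R * D) by apply/negP => /not_le.
  rewrite -ltNge [n.+2%:R]mulrSr; nra.
- apply: (natmul_bounded_le0 (a := D)) => n.
  have [_ +] := pp_thiele_marginal_bounds n.+1 x_range (ltn0Sn n.+1).
  rewrite marginalE ltnn => not_le.
  have: ~~ (n.+2%:R * D <= n.+1%:R * s 1%N) by apply/negP => /not_le.
  rewrite -ltNge [n.+2%:R]mulrSr; nra.
Qed.

Lemma pp_thiele_pav j : (0 < k)%N -> (j <= k)%N -> s j = s 1%N * pav_score R j.
Proof.
have [s0 _] := s_score; move=> k_gt0; elim: j => [|j IH] j_le_k.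
  by rewrite s0 pav_score0 mulr0.
have marginal := pp_thiele_marginal (x := j.+1) j_le_k.
have step : s j.+1 - s j = s 1%N / j.+1%:R.
  by rewrite -marginal /= mulrAC mulfV ?mul1r // pnatr_eq0.
rewrite pav_scoreS mulrDr -IH ?(ltnW j_le_k) // -step; ring.
Qed.

End PartyProportionalThiele.

Unset Implicit Arguments.

Theorem proposition2 (R : realType) (m k : nat)
    (hm : (2 <= m)%N) (hk1 : (1 <= k)%N) (hk2 : (k <= m - 1)%N) :
  (is_thiele_rule R m k (PAV R m k) /\ party_proportional R m (PAV R m k)) /\
  (forall f : abc_rule m, is_abc_rule m k f -> is_thiele_rule R m k f ->
     party_proportional R m f ->
     forall A : profile m, valid_profile m A -> f A = PAV R m k A).
Proof.
have k_lt_m : (k < m)%N by lia.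
split; first split.
- exists (pav_score R); split=> //; split; first exact: pav_score0.
  by move=> i j i_le_j _; apply: pav_score_nondecreasing.
- exact: pav_party_proportional.
move=> f _ [s [s_score f_thiele]] f_pp A A_valid.
have s1_gt0 := pp_thiele_score1_gt0 s_score f_thiele f_pp k_lt_m hk1.
rewrite f_thiele //; apply: (thiele_rule_scale A s1_gt0) => j.
exact: pp_thiele_pav s_score f_thiele f_pp k_lt_m j hk1.
Qed.
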